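(* Let $M=\{(z_1,z_2)\in\mathbb{C}^2:\operatorname{Im} z_2=|z_1|^2\}$. Let $\pi_1:U_1\to\mathbb{C}^2$ be the blow-up of the origin, with exceptional curve $E_1$, and let $M_1=\overline{\pi_1^{-1}(M\setminus\{0\})}$ be the proper transform of $M$. Let $U_1'$ be the affine chart of $U_1$ with coordinates $(z_1',z_2')$ in which $\pi_1(z_1',z_2')=(z_1',z_1'z_2')$, and let $\pi_2:U_2\to U_1'$ be the blow-up of the origin $0_1'$ of $U_1'$, with exceptional curve $E_2$, and $M_2=\overline{\pi_2^{-1}(M_1\cap U_1'\setminus\{0_1'\})}$. Let $U_2'$ be the affine chart of $U_2$ with coordinates $(u_1,u_2)$ in which $\pi_2(u_1,u_2)=(u_1,u_1u_2)$, and $0_2'$ its origin. Then: (a) $E_1\subset M_1$; (b) $M_2\cap E_2$ is a closed disk, given in $U_2'$ by $\{u_1=0,\ |u_2|\ge 1\}$ (together with the point of $E_2$ at infinity of this chart); (c) $0_2'\notin M_2$, so that if $\pi_3$ is the blow-up of $U_2$ at $0_2'$ with exceptional curve $E_3$, the proper transform $M_3$ of $M_2$ satisfies $M_3\cap E_3=\varnothing$. *)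

From Stdlib Require Import Reals Lra.
Open Scope R_scope.

Definition CC : Type := (R * R)%type.
Definition C0 : CC := (0, 0).
Definition Cre (z : CC) : R := fst z.
Definition Cim (z : CC) : R := snd z.
Definition Cmul (z w : CC) : CC :=
  (fst z * fst w - snd z * snd w, fst z * snd w + snd z * fst w).
Definition Csub (z w : CC) : CC := (fst z - fst w, snd z - snd w).
Definition Cnorm2 (z : CC) : R := fst z * fst z + snd z * snd z.
Definition Cmod (z : CC) : R := sqrt (Cnorm2 z).

Definition inM (z1 z2 : CC) : Prop := Cim z2 = Cnorm2 z1.

Definition closure2 (S : CC -> CC -> Prop) (p q : CC) : Prop :=
  forall eps : R, 0 < eps ->
    exists a b : CC, S a b /\ Cnorm2 (Csub a p) + Cnorm2 (Csub b q) < eps.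

(* Generic blow-up of CC^2 at the origin, charts:
     chart A : (a,b) |-> (a, a b),     exceptional curve {a = 0}
     chart B : (a,b) |-> (a b, b),     exceptional curve {b = 0}
   The proper transform of a set X (given in coordinates of CC^2) is the
   closure of pi^{-1}(X \ {0}); its trace on an (open) chart is the closure
   inside that chart of the chart-preimage of X \ {0}. *)
Definition propA (X : CC -> CC -> Prop) : CC -> CC -> Prop :=
  closure2 (fun a b => a <> C0 /\ X a (Cmul a b)).
Definition propB (X : CC -> CC -> Prop) : CC -> CC -> Prop :=
  closure2 (fun a b => b <> C0 /\ X (Cmul a b) b).

(* M1 in the two charts of U1 (U1' is chart A, coordinates (z1',z2')). *)
Definition M1A : CC -> CC -> Prop := propA inM.
Definition M1B : CC -> CC -> Prop := propB inM.
(* M2 : proper transform of M1 ∩ U1' under the blow-up of 0_1'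
   (U2' is chart A, coordinates (u1,u2)). *)
Definition M2A : CC -> CC -> Prop := propA M1A.
Definition M2B : CC -> CC -> Prop := propB M1A.
(* M3 : proper transform of M2 (restricted to U2') under the blow-up at 0_2'. *)
Definition M3A : CC -> CC -> Prop := propA M2A.
Definition M3B : CC -> CC -> Prop := propB M2A.

From Stdlib Require Import Reals Lra Psatz.
From Coquelicot Require Import Hierarchy Continuity.
Open Scope R_scope.

(* Every claim is either an inclusion of such a closure in a
   closed set, or the fact that a given point is a limit of preimage points.
   - Inclusions follow from one topological principle (closure2_ge0): a
     continuous function that is nonnegative on a set stays nonnegative on its
     closure.  Together with the elementary bound |Im w| <= |w| this yields
     M1 = {Im (z1' z2') = |z1'|^2} in chart A, the bounds |u2| >= 1 on M2 (chart
     A) and |v1| <= 1 on M2 (chart B), and the emptiness of M3 over E3.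
   - Limit points on the exceptional curves are produced explicitly: a complex
     square root of t c, for a unit c chosen with Im (c z) prescribed, gives
     points of the punctured preimages that are close to E1 and E2. *)

Ltac cunf := unfold Cnorm2, Cmul, Csub, Cim, C0 in *; cbn [fst snd] in *.

Lemma Cnorm2_nonneg z : 0 <= Cnorm2 z.
Proof. destruct z; cunf; nra. Qed.

Lemma C0_dec z : z = C0 \/ z <> C0.
Proof.
  destruct z as [x y]; unfold C0.
  destruct (Req_dec x 0), (Req_dec y 0); subst;
    [left; reflexivity | right; intro E; injection E; lra..].
Qed.

Lemma Cnorm2_pos z : z <> C0 -> 0 < Cnorm2 z.
Proof.
  destruct z as [x y]; intro Hz.
  destruct (Req_dec x 0), (Req_dec y 0); subst; [now contradiction Hz| | |]; cunf; nra.
Qed.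

Lemma Cnorm2_C0 : Cnorm2 C0 = 0.
Proof. cunf; ring. Qed.

Lemma Cnorm2_Cmul a b : Cnorm2 (Cmul a b) = Cnorm2 a * Cnorm2 b.
Proof. destruct a, b; cunf; ring. Qed.

Lemma Cnorm2_Csub_C0 z : Cnorm2 (Csub z C0) = Cnorm2 z.
Proof. destruct z; cunf; ring. Qed.

Lemma Cnorm2_Csub_diag z : Cnorm2 (Csub z z) = 0.
Proof. destruct z; cunf; ring. Qed.

Lemma Cmul_comm a b : Cmul a b = Cmul b a.
Proof. destruct a, b; unfold Cmul; cbn [fst snd]; f_equal; ring. Qed.

Lemma Cmul_assoc a b c : Cmul a (Cmul b c) = Cmul (Cmul a b) c.
Proof. destruct a, b, c; unfold Cmul; cbn [fst snd]; f_equal; ring. Qed.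

Lemma Cim_Cmul_sqr_le a b : Cim (Cmul a b) * Cim (Cmul a b) <= Cnorm2 a * Cnorm2 b.
Proof.
  destruct a as [x y], b as [u v]; cunf.
  pose proof (Rle_0_sqr (x * u - y * v)); unfold Rsqr in *; nra.
Qed.

Lemma Cmod_ge1_iff z : 1 <= Cmod z <-> 1 <= Cnorm2 z.
Proof.
  unfold Cmod; pose proof (Cnorm2_nonneg z) as Hz; split; intro H.
  - apply sqrt_le_0; [lra | lra | now rewrite sqrt_1].
  - rewrite <- sqrt_1; now apply sqrt_le_1_alt.
Qed.

Lemma Cmod_le1_iff z : Cmod z <= 1 <-> Cnorm2 z <= 1.
Proof.
  unfold Cmod; pose proof (Cnorm2_nonneg z) as Hz; split; intro H.
  - apply sqrt_le_0; [lra | lra | now rewrite sqrt_1].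
  - rewrite <- sqrt_1; now apply sqrt_le_1_alt.
Qed.

Lemma Csqrt_exists w : exists a, Cmul a a = w.
Proof.
  destruct w as [x y].
  set (r := sqrt (x * x + y * y)).
  assert (Er : r * r = x * x + y * y) by (apply sqrt_sqrt; nra).
  assert (Hr : 0 <= r) by apply sqrt_pos.
  assert (Hrx : - r <= x <= r) by nra.
  set (X := sqrt ((r + x) / 2)); set (Y := sqrt ((r - x) / 2)).
  assert (EX : X * X = (r + x) / 2) by (apply sqrt_sqrt; lra).
  assert (EY : Y * Y = (r - x) / 2) by (apply sqrt_sqrt; lra).
  assert (HXY : 2 * X * Y = Rabs y).
  { rewrite <- (sqrt_square (2 * X * Y)), <- sqrt_Rsqr_abs.
    - f_equal; unfold Rsqr; nra.
    - assert (0 <= X) by apply sqrt_pos; assert (0 <= Y) by apply sqrt_pos; nra. }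
  destruct (Rle_or_lt 0 y) as [Hy | Hy].
  - rewrite Rabs_pos_eq in HXY by lra.
    exists (X, Y); unfold Cmul; cbn [fst snd]; f_equal; lra.
  - rewrite Rabs_left in HXY by lra.
    exists (X, - Y); unfold Cmul; cbn [fst snd]; f_equal; lra.
Qed.

Lemma unit_with_Im z y :
  y * y <= Cnorm2 z -> exists c, Cnorm2 c = 1 /\ Cim (Cmul c z) = y.
Proof.
  destruct z as [u v]; cunf; intro Hy.
  set (N := u * u + v * v) in *.
  destruct (Req_dec N 0) as [HN | HN].
  - exists (1, 0); cunf; split; [ring|].
    assert (v = 0) by (unfold N in HN; nra). assert (y = 0) by nra. subst; ring.
  - set (s := sqrt (N - y * y)).
    assert (Es : s * s = N - y * y) by (apply sqrt_sqrt; lra).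
    exists ((s * u + y * v) / N, (y * u - s * v) / N); cunf; split.
    + field_simplify_eq; [|exact HN].
      transitivity ((s * s + y * y) * N); [unfold N; ring | rewrite Es; ring].
    + field_simplify_eq; [unfold N; ring | exact HN].
Qed.

(* A square root of t c, for such a unit c: a point a with |a|^2 = t and
   Im (a^2 z) = t y. *)
Lemma root_with_Im z y t :
  y * y <= Cnorm2 z -> 0 < t ->
  exists a, Cnorm2 a = t /\ Cim (Cmul (Cmul a a) z) = t * y.
Proof.
  intros Hy Ht.
  destruct (unit_with_Im z y Hy) as [c [Hc Hcz]].
  destruct (Csqrt_exists (t * fst c, t * snd c)) as [a Ha].
  exists a; split.
  - assert (Hsq : Cnorm2 a * Cnorm2 a = t * t).
    { rewrite <- Cnorm2_Cmul, Ha. destruct c; cunf. rewrite <- (Rmult_1_r (t * t)), <- Hc; ring. }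
    pose proof (Cnorm2_nonneg a); nra.
  - rewrite Ha, <- Hcz. destruct c, z; cunf; ring.
Qed.

Lemma small_pos eps : 0 < eps -> exists t, 0 < t /\ t * t < eps.
Proof.
  intro He; exists (Rmin (eps / 2) (1 / 2)).
  pose proof (Rmin_l (eps / 2) (1 / 2)); pose proof (Rmin_r (eps / 2) (1 / 2)).
  assert (0 < Rmin (eps / 2) (1 / 2)) by (apply Rmin_glb_lt; lra).
  repeat split; nra.
Qed.

Lemma circle_point c t :
  0 < t -> exists b, b <> C0 /\ Cnorm2 b <= t * t /\ Cim b = c * Cnorm2 b.
Proof.
  intro Ht.
  set (D := 1 + c * c * t * t).
  assert (HD : 1 <= D) by (unfold D; nra).
  assert (HN : Cnorm2 (t / D, c * t * t / D) = t * t / D)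
    by (cunf; field_simplify_eq; [unfold D; ring | lra]).
  exists (t / D, c * t * t / D); repeat split.
  - intro E; injection E as E _.
    assert (0 < t / D) by (apply Rdiv_lt_0_compat; lra); lra.
  - rewrite HN; apply Rmult_le_reg_r with D; [lra|].
    field_simplify; [nra | lra].
  - rewrite HN; cunf; field; lra.
Qed.

Lemma closure2_of_mem (S : CC -> CC -> Prop) p q : S p q -> closure2 S p q.
Proof.
  intros Hpq eps He; exists p, q; split; [exact Hpq|].
  rewrite !Cnorm2_Csub_diag; lra.
Qed.

Lemma Rabs_lt_of_sqr_lt x d : 0 < d -> x * x < d * d -> Rabs x < d.
Proof.
  intros Hd Hx. rewrite <- (Rabs_pos_eq d) by lra.
  apply Rsqr_lt_abs_0; unfold Rsqr; lra.
Qed.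

Lemma closure2_ge0 (S : CC -> CC -> Prop) (g : CC -> CC -> R) (p q : CC) :
  (forall x : (R * R) * (R * R), continuous (fun x => g (fst x) (snd x)) x) ->
  (forall a b, S a b -> 0 <= g a b) ->
  closure2 S p q -> 0 <= g p q.
Proof.
  intros Hcont Hpos Hcl.
  apply Rnot_lt_le; intro Hneg.
  destruct (proj1 (filterlim_locally _ _) (Hcont (p, q))
              (mkposreal _ (Ropp_0_gt_lt_contravar _ Hneg))) as [d Hd].
  destruct (Hcl (d * d)) as [a [b [Hab Hdist]]]; [pose proof (cond_pos d); nra|].
  assert (Hball : ball (p, q) d (a, b)).
  { destruct p as [p1 p2], q as [q1 q2], a as [a1 a2], b as [b1 b2].
    cunf. pose proof (cond_pos d).
    pose proof (Rle_0_sqr (a1 - p1)); pose proof (Rle_0_sqr (a2 - p2));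
    pose proof (Rle_0_sqr (b1 - q1)); pose proof (Rle_0_sqr (b2 - q2)); unfold Rsqr in *.
    repeat split; cbn [fst snd];
      match goal with |- ball ?x _ ?y => change (Rabs (y - x) < d) end;
      apply Rabs_lt_of_sqr_lt; lra. }
  specialize (Hd (a, b) Hball). specialize (Hpos a b Hab).
  change (Rabs (g a b - g p q) < - g p q) in Hd.
  apply Rabs_def2 in Hd. lra.
Qed.

Ltac continuity_poly :=
  intros [[? ?] [? ?]]; cunf;
  repeat match goal with
  | |- continuous (fun x => Rplus (@?f x) (@?g x)) _ => apply (continuous_plus f g)
  | |- continuous (fun x => Rminus (@?f x) (@?g x)) _ => apply (continuous_minus f g)
  | |- continuous (fun x => Rmult (@?f x) (@?g x)) _ => apply (continuous_mult f g)
  | |- continuous (fun x => fst (@?f x)) _ => apply (continuous_comp f fst)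
  | |- continuous (fun x => snd (@?f x)) _ => apply (continuous_comp f snd)
  | |- continuous (fun x => x) _ => apply continuous_id
  | |- continuous (fun _ => _) _ => apply continuous_const
  | |- continuous fst _ => cbn [fst snd]; apply continuous_fst
  | |- continuous snd _ => cbn [fst snd]; apply continuous_snd
  end.

Lemma closure2_eq0 (S : CC -> CC -> Prop) (g : CC -> CC -> R) (p q : CC) :
  (forall x : (R * R) * (R * R), continuous (fun x => g (fst x) (snd x)) x) ->
  (forall a b, S a b -> g a b = 0) ->
  closure2 S p q -> g p q = 0.
Proof.
  intros Hcont Hzero Hcl.
  assert (Hopp : forall x : (R * R) * (R * R),
             continuous (fun x => - g (fst x) (snd x)) x)
    by (intro x; apply (continuous_opp (fun x => g (fst x) (snd x))), Hcont).
  pose proof (closure2_ge0 S g p q Hcont (fun a b H => Req_le_sym _ _ (Hzero a b H)) Hcl).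
  pose proof (closure2_ge0 S (fun a b => - g a b) p q Hopp
                (fun a b H => Req_le _ _ (eq_sym (Ropp_eq_0_compat _ (Hzero a b H)))) Hcl).
  cbn beta in *; lra.
Qed.

(* Along E1 = {z1' = 0} the equation Im (z1' z2') =
   |z1'|^2 of the total transform is satisfied; every such point is a limit of
   points z1' = t c, z2' = w + i t conj c with Im (c w) = 0 and t -> 0. *)
Lemma M1A_exceptional w : M1A C0 w.
Proof.
  intros eps He.
  destruct (small_pos (eps / 2)) as [t [Ht Htt]]; [lra|].
  destruct (unit_with_Im w 0) as [[c1 c2] [Hc Hcw]]; [pose proof (Cnorm2_nonneg w); lra|].
  assert (Ha : Cnorm2 (t * c1, t * c2) = t * t)
    by (cunf; rewrite <- (Rmult_1_r (t * t)), <- Hc; ring).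
  exists (t * c1, t * c2), (fst w + t * c2, snd w + t * c1); split; [split|].
  - intro E; rewrite E, Cnorm2_C0 in Ha; nra.
  - unfold inM; rewrite Ha; destruct w as [w1 w2]; cunf.
    transitivity (t * (c1 * w2 + c2 * w1) + t * t * (c1 * c1 + c2 * c2)); [ring|].
    rewrite Hcw, Hc; ring.
  - rewrite Cnorm2_Csub_C0, Ha; destruct w; cunf; nra.
Qed.

(* In chart A, M1 is exactly the total transform {Im (p q) = |p|^2}: this set
   is closed, and its points over p = 0 are limits by M1A_exceptional. *)
Lemma M1A_iff p q : M1A p q <-> Cim (Cmul p q) = Cnorm2 p.
Proof.
  split.
  - intro H.
    enough (Cim (Cmul p q) - Cnorm2 p = 0) by lra.
    refine (closure2_eq0 _ (fun a b => Cim (Cmul a b) - Cnorm2 a) p q _ _ H);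
      [continuity_poly|].
    intros a b [_ Hm]; unfold inM in Hm; lra.
  - intro H; destruct (C0_dec p) as [-> | Hp].
    + apply M1A_exceptional.
    + now apply closure2_of_mem.
Qed.

(* In chart B the points of E1 = {b = 0} are limits of points (v, b) with b
   on the circle Im b = |v|^2 |b|^2. *)
Lemma M1B_exceptional v : M1B v C0.
Proof.
  intros eps He.
  destruct (small_pos eps He) as [t [Ht Htt]].
  destruct (circle_point (Cnorm2 v) t Ht) as [b [Hb [Hbt Hbim]]].
  exists v, b; split; [split|].
  - exact Hb.
  - unfold inM; now rewrite Cnorm2_Cmul.
  - rewrite Cnorm2_Csub_diag, Cnorm2_Csub_C0; lra.
Qed.

(* The second blow-up.  On the punctured preimage of M1 in chart A,
   Im (u1^2 u2) = |u1|^2 with u1 <> 0 forces |u2| >= 1, since |Im w| <= |w|. *)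
Lemma preimage2A_bound a b :
  a <> C0 -> Cim (Cmul (Cmul a a) b) = Cnorm2 a -> 1 <= Cnorm2 b.
Proof.
  intros Ha Him.
  pose proof (Cim_Cmul_sqr_le (Cmul a a) b) as Hle.
  rewrite Him, Cnorm2_Cmul in Hle.
  pose proof (Cnorm2_pos a Ha).
  apply Rmult_le_reg_l with (Cnorm2 a * Cnorm2 a); nra.
Qed.

Lemma preimage2B_bound a b :
  b <> C0 -> Cim (Cmul a (Cmul b b)) = Cnorm2 a * Cnorm2 b -> Cnorm2 a <= 1.
Proof.
  intros Hb Him.
  pose proof (Cim_Cmul_sqr_le a (Cmul b b)) as Hle.
  rewrite Him, Cnorm2_Cmul in Hle.
  pose proof (Cnorm2_pos b Hb); pose proof (Cnorm2_nonneg a).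
  assert (Hbb : 0 < Cnorm2 b * Cnorm2 b) by nra.
  assert (Cnorm2 a * Cnorm2 a <= Cnorm2 a) by nra.
  nra.
Qed.

Lemma M2A_bound p q : M2A p q -> 1 <= Cnorm2 q.
Proof.
  intro H.
  enough (0 <= Cnorm2 q - 1) by lra.
  refine (closure2_ge0 _ (fun _ b => Cnorm2 b - 1) p q _ _ H); [continuity_poly|].
  intros a b [Ha Hm]; apply M1A_iff in Hm; rewrite Cmul_assoc in Hm.
  pose proof (preimage2A_bound a b Ha Hm); lra.
Qed.

Lemma M2B_bound p q : M2B p q -> Cnorm2 p <= 1.
Proof.
  intro H.
  enough (0 <= 1 - Cnorm2 p) by lra.
  refine (closure2_ge0 _ (fun a _ => 1 - Cnorm2 a) p q _ _ H); [continuity_poly|].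
  intros a b [Hb Hm]; apply M1A_iff in Hm.
  rewrite <- Cmul_assoc, Cnorm2_Cmul in Hm.
  pose proof (preimage2B_bound a b Hb Hm); lra.
Qed.

(* Conversely, a point (0, u) with |u| >= 1 is a limit of the points (a, u)
   where a^2 = t c, |c| = 1 and Im (c u) = 1. *)
Lemma M2A_exceptional u : 1 <= Cnorm2 u -> M2A C0 u.
Proof.
  intros Hu eps He.
  destruct (root_with_Im u 1 (eps / 2)) as [a [Ha Him]]; [lra | lra |].
  exists a, u; split; [split|].
  - intro E; rewrite E, Cnorm2_C0 in Ha; lra.
  - apply M1A_iff; rewrite Cmul_assoc, Him, Ha; ring.
  - rewrite Cnorm2_Csub_C0, Cnorm2_Csub_diag; lra.
Qed.

(* Likewise (v, 0) with |v| <= 1 is a limit of points (v, b) where b^2 = t c,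
   |c| = 1 and Im (c v) = |v|^2. *)
Lemma M2B_exceptional v : Cnorm2 v <= 1 -> M2B v C0.
Proof.
  intros Hv eps He.
  pose proof (Cnorm2_nonneg v).
  destruct (root_with_Im v (Cnorm2 v) (eps / 2)) as [b [Hb Him]]; [nra | lra |].
  exists v, b; split; [split|].
  - intro E; rewrite E, Cnorm2_C0 in Hb; lra.
  - apply M1A_iff.
    rewrite <- Cmul_assoc, (Cmul_comm v), Him, Cnorm2_Cmul, Hb; ring.
  - rewrite Cnorm2_Csub_diag, Cnorm2_Csub_C0; lra.
Qed.

(* M2 over E2, in both charts: the closed disk {|u2| >= 1} U {oo} = {|v1| <= 1}. *)
Lemma M2A_exceptional_iff u : M2A C0 u <-> 1 <= Cmod u.
Proof.
  rewrite Cmod_ge1_iff; split; [apply M2A_bound | apply M2A_exceptional].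
Qed.

Lemma M2B_exceptional_iff v : M2B v C0 <-> Cmod v <= 1.
Proof.
  rewrite Cmod_le1_iff; split; [apply M2B_bound | apply M2B_exceptional].
Qed.

Lemma M2A_origin : ~ M2A C0 C0.
Proof. intro H; apply M2A_bound in H; rewrite Cnorm2_C0 in H; lra. Qed.

(* ... and M3 does not meet E3: in chart A the preimage satisfies
   |a|^2 |b|^2 >= 1, which fails on {a = 0} ... *)
Lemma M3A_exceptional_empty w : ~ M3A C0 w.
Proof.
  intro H.
  assert (Hg : 0 <= Cnorm2 C0 * Cnorm2 w - 1).
  { refine (closure2_ge0 _ (fun a b => Cnorm2 a * Cnorm2 b - 1) C0 w _ _ H);
      [continuity_poly|].
    intros a b [_ Hm]; apply M2A_bound in Hm; rewrite Cnorm2_Cmul in Hm; lra. }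
  rewrite Cnorm2_C0 in Hg; lra.
Qed.

(* ... and in chart B it satisfies |b|^2 >= 1, which fails on {b = 0}. *)
Lemma M3B_exceptional_empty v : ~ M3B v C0.
Proof.
  intro H.
  assert (Hg : 0 <= Cnorm2 C0 - 1).
  { refine (closure2_ge0 _ (fun _ b => Cnorm2 b - 1) v C0 _ _ H); [continuity_poly|].
    intros a b [_ Hm]; apply M2A_bound in Hm; lra. }
  rewrite Cnorm2_C0 in Hg; lra.
Qed.

Theorem mainTheorem4 :
  ((forall w : CC, M1A C0 w) /\ (forall v : CC, M1B v C0)) /\
  ((forall u2 : CC, M2A C0 u2 <-> 1 <= Cmod u2) /\
   (forall v1 : CC, M2B v1 C0 <-> Cmod v1 <= 1)) /\
  (~ M2A C0 C0 /\
   (forall w : CC, ~ M3A C0 w) /\ (forall v : CC, ~ M3B v C0)).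
Proof.
  split; [split|split; [split|split; [|split]]].
  - exact M1A_exceptional.
  - exact M1B_exceptional.
  - exact M2A_exceptional_iff.
  - exact M2B_exceptional_iff.
  - exact M2A_origin.
  - exact M3A_exceptional_empty.
  - exact M3B_exceptional_empty.
Qed.
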